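(* Fix $p\in(0,1)$, $q=1-p$, and let $T_{n,p}$ be the post-loss completion time of the careless coupon collector started from the empty collection. Then \[\log T_{n,p}=\frac{n(n+1)}{2}\log\frac1q+\log\frac{n^n}{n!}+\mathrm O_{\mathbb P}(1),\] equivalently $\log T_{n,p}=\frac{n(n+1)}{2}\log\frac{1}{1-p}+n-\frac12\log(2\pi n)+\mathrm O_{\mathbb P}(1)$.
   Context: Careless coupon collector (post-loss convention): $S_t\subseteq[n]$, $S_0=\emptyset$; in each round a type $J_t$ is drawn uniformly from $[n]$ independently, and then each coupon of $S_t\cup\{J_t\}$ is independently lost with probability $p$, the survivors forming $S_{t+1}$. $T_{n,p}=\inf\{t\ge0:S_t=[n]\}$. $\mathrm O_{\mathbb P}(1)$ denotes a sequence of random variables that is tight (bounded in probability). *)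

From HB Require Import structures.
From mathcomp Require Import all_boot all_order all_algebra.
From mathcomp Require Import all_classical all_reals all_analysis.
Set Implicit Arguments. Unset Strict Implicit. Unset Printing Implicit Defensive.
Import Order.TTheory GRing.Theory Num.Theory.
Local Open Scope ring_scope.

(* One round of the careless coupon collector on [n] = 'I_n:
   r.1 = the drawn type J_t (uniform on 'I_n),
   r.2 = the set L_t of coupons whose "loss coin" comes up (each i independently
         with probability p).  Only coins of coupons in S_t :|: {J_t} matter. *)
Definition ccc_round (n : nat) := ('I_n * {set 'I_n})%type.

Definition ccc_step (n : nat) (S : {set 'I_n}) (r : ccc_round n) : {set 'I_n} :=
  (r.1 |: S) :\: r.2.

Definition ccc_round_weight (R : realType) (n : nat) (p : R) (r : ccc_round n) : R :=
  (n%:R)^-1 * p ^+ #|r.2| * (1 - p) ^+ (n - #|r.2|).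

Definition ccc_weight (R : realType) (n b : nat) (p : R)
  (w : {ffun 'I_b -> ccc_round n}) : R :=
  \prod_(i < b) ccc_round_weight p (w i).

Definition ccc_state (n b : nat) (w : {ffun 'I_b -> ccc_round n}) (s : nat)
  : {set 'I_n} :=
  foldl (@ccc_step n) finset.set0 (take s [seq w i | i <- enum 'I_b]).

Definition ccc_T_is (n b : nat) (w : {ffun 'I_b -> ccc_round n}) (s : nat) : bool :=
  (ccc_state w s == [set: 'I_n]) &&
  [forall s' : 'I_b.+1, (s' < s)%N ==> (ccc_state w s' != [set: 'I_n])].

(* P( T_{n,p} <= b  and  A(T_{n,p}) ), computed on the first b rounds *)
Definition ccc_prob_T (R : realType) (n : nat) (p : R) (b : nat) (A : pred nat) : R :=
  \sum_(w : {ffun 'I_b -> ccc_round n})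
     ccc_weight p w * (([exists s : 'I_b.+1, ccc_T_is w s && A s] : bool)%:R).

Definition ccc_center (R : realType) (n : nat) (p : R) : R :=
  ((n * n.+1)./2)%:R * ln ((1 - p)^-1) + ln ((n ^ n)%:R / (n`!)%:R).

(* Let rho = n! / n^n * q^(n(n+1)/2), so that rho = exp (- a_n).
   Lower tail: conditioning on the last round shows that m given coupons are
   all held at any time with probability at most
   m! / n^m * q^(m(m+1)/2) * exp (q / p^2); for m = n this gives
   P(S_k = [n]) <= C rho with C = exp (q / p^2) for every k, hence
   P(T < exp (a_n - M)) <= C exp (-M).
   Upper tail: n consecutive rounds that each draw a new coupon and lose none
   of the coupons drawn so far complete the collection.  In a block of 2n
   rounds such a window starts at one of the first n rounds with probability
   at least n p rho, independently over disjoint blocks, so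
   P(T > exp (a_n + M)) <= (1 - n p rho)^(exp (a_n + M) / 2n) = O(exp (-M)). *)

From HB Require Import structures.
From mathcomp Require Import all_boot all_order all_algebra.
From mathcomp Require Import all_classical all_reals all_analysis.
From mathcomp Require Import lra zify ring.
Set Implicit Arguments. Unset Strict Implicit. Unset Printing Implicit Defensive.
Import Order.TTheory GRing.Theory Num.Theory.
Local Open Scope ring_scope.
Local Notation set0 := finset.set0.

Section SeqExpectation.
Variables (R : numDomainType) (X : finType) (w : X -> R).

Fixpoint Eseq (b : nat) (f : seq X -> R) : R :=
  if b is b'.+1 then \sum_x w x * Eseq b' (fun s => f (x :: s)) else f [::].

Lemma eq_Eseq b f g : (forall s, size s = b -> f s = g s) -> Eseq b f = Eseq b g.
Proof.
elim: b f g => [|b IH] f g fg /=; first exact: fg.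
apply: eq_bigr => x _; congr (_ * _); apply: IH => s sb; apply: fg; by rewrite /= sb.
Qed.

Lemma EseqD b f g : Eseq b (fun s => f s + g s) = Eseq b f + Eseq b g.
Proof.
elim: b f g => [|b IH] f g //=.
by rewrite -big_split; apply: eq_bigr => x _; rewrite IH mulrDr.
Qed.

Lemma EseqZl b c f : Eseq b (fun s => c * f s) = c * Eseq b f.
Proof.
elim: b f => [|b IH] f //=.
by rewrite mulr_sumr; apply: eq_bigr => x _; rewrite IH mulrCA.
Qed.

Lemma Eseq_sum (I : finType) (P : pred I) b (F : I -> seq X -> R) :
  Eseq b (fun s => \sum_(i | P i) F i s) = \sum_(i | P i) Eseq b (F i).
Proof.
elim: b F => [|b IH] F //=.
rewrite exchange_big /=; apply: eq_bigr => x _.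
by rewrite (IH (fun i s => F i (x :: s))) mulr_sumr.
Qed.

Lemma Eseq_rcons b f : Eseq b.+1 f = Eseq b (fun s => \sum_x w x * f (rcons s x)).
Proof.
elim: b f => [|b IH] f //.
transitivity (\sum_y w y * Eseq b.+1 (fun s => f (y :: s))); first by [].
by rewrite [RHS]/=; apply: eq_bigr => y _; rewrite IH.
Qed.

Lemma Eseq_cat a c f g :
  Eseq (a + c) (fun s => f (take a s) * g (drop a s)) = Eseq a f * Eseq c g.
Proof.
elim: a f => [|a IH] f /=.
  by rewrite add0n -EseqZl; apply: eq_Eseq => s _; rewrite take0 drop0.
by rewrite mulr_suml; apply: eq_bigr => x _; rewrite -mulrA -IH.
Qed.

Definition fcons b (xv : X * {ffun 'I_b -> X}) : {ffun 'I_b.+1 -> X} :=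
  [ffun i => if unlift ord0 i is Some j then xv.2 j else xv.1].

Definition funcons b (v : {ffun 'I_b.+1 -> X}) : X * {ffun 'I_b -> X} :=
  (v ord0, [ffun j => v (lift ord0 j)]).

Lemma fconsK b : cancel (@fcons b) (@funcons b).
Proof.
case=> x v; rewrite /funcons /fcons /= ffunE unlift_none; congr pair.
by apply/ffunP => j; rewrite !ffunE liftK.
Qed.

Lemma funconsK b : cancel (@funcons b) (@fcons b).
Proof.
move=> v; apply/ffunP => i; rewrite /fcons ffunE.
by case: unliftP => [j ->|->]; rewrite ?ffunE.
Qed.

Lemma codom_fcons b x v : codom (@fcons b (x, v)) = x :: codom v.
Proof.
rewrite !codomE enum_ordSl /= ffunE unlift_none; congr cons.
by rewrite -map_comp; apply: eq_map => j /=; rewrite ffunE liftK.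
Qed.

Lemma sum_ffun_Eseq b F :
  \sum_(v : {ffun 'I_b -> X}) (\prod_(i < b) w (v i)) * F (codom v) = Eseq b F.
Proof.
elim: b F => [|b IH] F /=.
  rewrite (eq_bigr (fun _ => F [::])) => [|v _]; last first.
    by rewrite big_ord0 mul1r; congr F; apply: size0nil; rewrite size_codom card_ord.
  by rewrite sumr_const card_ffun card_ord expn0 mulr1n.
rewrite (reindex (@fcons b)); last first.
  by exists (@funcons b) => v _; [apply: fconsK|apply: funconsK].
rewrite -(pair_big xpredT xpredT (fun x v =>
  (\prod_(i < b.+1) w (fcons (x, v) i)) * F (codom (fcons (x, v))))) /=.
apply: eq_bigr => x _; rewrite -(IH (fun s => F (x :: s))) mulr_sumr.
apply: eq_bigr => v _; rewrite big_ord_recl codom_fcons !ffunE unlift_none mulrA.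
by congr (_ * _ * _); apply: eq_bigr => j _; rewrite ffunE liftK.
Qed.

Hypothesis w_ge0 : forall x, 0 <= w x.
Hypothesis w_sum1 : \sum_x w x = 1.

Lemma Eseq_cst b c : Eseq b (fun _ => c) = c.
Proof. by elim: b => [|b IH] //=; rewrite IH -mulr_suml w_sum1 mul1r. Qed.

Lemma ler_Eseq b f g : (forall s, size s = b -> f s <= g s) -> Eseq b f <= Eseq b g.
Proof.
elim: b f g => [|b IH] f g fg /=; first exact: fg.
apply: ler_sum => x _; apply: ler_wpM2l => //.
by apply: IH => s sb; apply: fg; rewrite /= sb.
Qed.

Lemma Eseq_ge0 b f : (forall s, size s = b -> 0 <= f s) -> 0 <= Eseq b f.
Proof. by move=> f0; rewrite -(Eseq_cst b 0); apply: ler_Eseq. Qed.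

Lemma Eseq_take a c f : Eseq (a + c) (fun s => f (take a s)) = Eseq a f.
Proof.
rewrite -[RHS]mulr1 -(Eseq_cst c 1) -Eseq_cat.
by apply: eq_Eseq => s _; rewrite mulr1.
Qed.

Lemma Eseq_drop a c g : Eseq (a + c) (fun s => g (drop a s)) = Eseq c g.
Proof.
rewrite -[RHS]mul1r -(Eseq_cst a 1) -Eseq_cat.
by apply: eq_Eseq => s _; rewrite mul1r.
Qed.

Lemma EseqB b f g : Eseq b (fun s => f s - g s) = Eseq b f - Eseq b g.
Proof.
rewrite -mulN1r -(EseqZl b (-1) g) -EseqD.
by apply: eq_Eseq => s _; rewrite mulN1r.
Qed.

End SeqExpectation.

Lemma sum_set_prod (R : pzSemiRingType) (I : finType) (g : I -> bool -> R) :
  \sum_(L : {set I}) \prod_i g i (i \in L) = \prod_i (g i true + g i false).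
Proof.
rewrite (eq_bigr (fun i => \sum_(b : bool) g i b)); last by move=> i _; rewrite big_bool.
rewrite bigA_distr_bigA /= (reindex (fun L : {set I} => [ffun i => i \in L])).
  by apply: eq_bigr => L _; apply: eq_bigr => i _; rewrite ffunE.
exists (fun f : {ffun I -> bool} => [set i | f i]) => [L _|f _].
  by apply/setP => i; rewrite inE ffunE.
by apply/ffunP => i; rewrite ffunE inE.
Qed.

Lemma disjoint_indicatorE (R : comPzSemiRingType) (I : finType) (A L : {set I}) :
  ((A :&: L == set0)%:R : R) = \prod_i (if i \in A then (i \notin L)%:R else 1).
Proof.
have [/eqP AL0|/set0Pn [i]] := boolP (A :&: L == set0).
  apply/esym/big1 => i _; case: ifP => // iA.
  have : i \notin A :&: L by rewrite AL0 inE.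
  by rewrite inE iA /= => ->.
by rewrite inE => /andP [iA iL]; rewrite (bigD1 i) //= iA iL mul0r.
Qed.

Section RoundLaw.
Variables (R : realType) (p : R) (n : nat).
Hypothesis hp0 : 0 < p.
Hypothesis hp1 : p < 1.
Hypothesis hn : (0 < n)%N.

Local Notation q := (1 - p).
Local Notation rw := (@ccc_round_weight R n p).
Local Notation X := (ccc_round n).

Definition loss_weight (L : {set 'I_n}) : R := p ^+ #|L| * q ^+ (n - #|L|).

Lemma loss_weightE L : loss_weight L = \prod_i (if i \in L then p else q).
Proof.
rewrite /loss_weight (bigID (mem L)) /= (eq_bigr (fun _ => p)) => [|i ->//].
rewrite [X in _ = _ * X](eq_bigr (fun _ => q)) => [|i /negbTE ->//].
rewrite !prodr_const; congr (_ * _ ^+ _).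
rewrite -[n in (n - _)%N]card_ord -(cardsC L) addKn.
by apply: eq_card => i; rewrite !inE.
Qed.

Lemma sum_loss_disjoint (A : {set 'I_n}) :
  \sum_L loss_weight L * (A :&: L == set0)%:R = q ^+ #|A|.
Proof.
transitivity (\sum_(L : {set 'I_n}) \prod_i
   ((if i \in L then p else q) * (if i \in A then (i \notin L)%:R else 1))).
  by apply: eq_bigr => L _; rewrite big_split /= -loss_weightE -disjoint_indicatorE.
rewrite (sum_set_prod (fun i b => (if b then p else q) * (if i \in A then (~~ b)%:R else 1))).
rewrite -prodr_const [RHS]big_mkcond /=; apply: eq_bigr => i _.
by case: (i \in A); rewrite /= ?mulr1 ?mulr0 ?add0r ?mul1r // addrC subrK.
Qed.

Lemma sum_loss_weight : \sum_L loss_weight L = 1.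
Proof.
rewrite -(expr0 q) -(cards0 'I_n) -sum_loss_disjoint.
by apply: eq_bigr => L _; rewrite finset.set0I eqxx mulr1.
Qed.

Lemma sum_loss_in (j : 'I_n) : \sum_L loss_weight L * (j \in L)%:R = p.
Proof.
have jL (L : {set 'I_n}) : ((j \in L)%:R : R) = 1 - ([set j] :&: L == set0)%:R.
  by rewrite setI_eq0 disjoints1; case: (j \in L); rewrite ?subr0 ?subrr.
under eq_bigr do rewrite jL mulrBr mulr1.
by rewrite sumrB sum_loss_weight sum_loss_disjoint cards1 expr1 opprB addrC subrK.
Qed.

Lemma sum_round_weight (F : 'I_n -> {set 'I_n} -> R) :
  \sum_(x : X) rw x * F x.1 x.2 = n%:R^-1 * \sum_J \sum_L loss_weight L * F J L.
Proof.
rewrite -(pair_bigA _ (fun J L => rw (J, L) * F J L)) mulr_sumr.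
apply: eq_bigr => J _; rewrite mulr_sumr; apply: eq_bigr => L _.
by rewrite /ccc_round_weight /loss_weight /= !mulrA.
Qed.

Lemma round_weight_ge0 x : 0 <= rw x.
Proof.
rewrite /ccc_round_weight !mulr_ge0 ?exprn_ge0 ?invr_ge0 //; first exact: ltW.
by rewrite subr_ge0 ltW.
Qed.

Lemma n_neq0 : (n%:R : R) != 0.
Proof. by rewrite pnatr_eq0 -lt0n. Qed.

Lemma sum_round_weight1 : \sum_(x : X) rw x = 1.
Proof.
have := sum_round_weight (fun _ _ => 1); under eq_bigr do rewrite mulr1; move=> ->.
under eq_bigr do under eq_bigr do rewrite mulr1.
by rewrite sum_loss_weight sumr_const card_ord mulVf ?n_neq0.
Qed.

Lemma prob_drawn_lost : \sum_(x : X) rw x * (x.1 \in x.2)%:R = p.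
Proof.
rewrite (sum_round_weight (fun J L => (J \in L)%:R)).
under eq_bigr do rewrite sum_loss_in.
by rewrite sumr_const card_ord -[p *+ n]mulr_natl mulrA mulVf ?n_neq0 ?mul1r.
Qed.

End RoundLaw.

Section CleanRuns.
Variables (R : realType) (p : R) (n : nat).
Hypothesis hp0 : 0 < p.
Hypothesis hp1 : p < 1.
Hypothesis hn : (0 < n)%N.

Local Notation q := (1 - p).
Local Notation rw := (@ccc_round_weight R n p).
Local Notation X := (ccc_round n).
Local Notation step := (@ccc_step n).
Local Notation rw_ge0 := (round_weight_ge0 hp0 hp1).
Local Notation rw_sum1 := (sum_round_weight1 p hn).

Lemma q_gt0 : 0 < q. Proof. by rewrite subr_gt0. Qed.
Lemma q_ge0 : 0 <= q. Proof. exact: ltW q_gt0. Qed.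
Lemma q_le1 : q <= 1. Proof. by rewrite lerBlDr lerDl ltW. Qed.

Lemma sum_notin (A : {set 'I_n}) (c : R) :
  \sum_J (J \notin A)%:R * c = (n - #|A|)%:R * c.
Proof.
transitivity (\sum_(J in ~: A) c).
  rewrite [RHS]big_mkcond; apply: eq_bigr => J _.
  by rewrite inE; case: (J \notin A); rewrite ?mul1r ?mul0r.
by rewrite sumr_const -[c *+ _]mulr_natl cardsCs finset.setCK card_ord.
Qed.

(* [A] holds the coupons drawn earlier in the run; [n] clean rounds fill any
   collection, whatever coupons it held before. *)
Fixpoint clean_run (A : {set 'I_n}) (s : seq X) : bool :=
  if s is x :: s' then
    [&& x.1 \notin A, (x.1 |: A) :&: x.2 == set0 & clean_run (x.1 |: A) s']
  else true.

Lemma clean_run_card A s (S : {set 'I_n}) : clean_run A s -> A \subset S ->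
  (#|A| + size s <= #|foldl step S s|)%N.
Proof.
elim: s A S => [|x s IH] A S /=; first by move=> _ /subset_leq_card; rewrite addn0.
case/and3P => xA /eqP lost0 run AS.
have cardA : #|x.1 |: A| = #|A|.+1 by rewrite cardsU1 xA.
rewrite addnS -addSn -cardA; apply: IH run _.
apply/fintype.subsetP => i iA'; rewrite /ccc_step !inE; apply/andP; split.
  apply/negP => iL; have : i \in (x.1 |: A) :&: x.2 by rewrite inE iA' iL.
  by rewrite lost0 inE.
by move: iA'; rewrite !inE => /orP [->//|iA]; rewrite (fintype.subsetP AS) ?orbT.
Qed.

Lemma clean_run_full s (S : {set 'I_n}) :
  clean_run set0 s -> size s = n -> foldl step S s = [set: 'I_n].
Proof.
move=> run sn; have := clean_run_card (S := S) run (finset.sub0set _).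
rewrite cards0 add0n sn => nS.
by apply/eqP; rewrite eqEcard finset.subsetT cardsT card_ord.
Qed.

Lemma clean_run_keeps_drawn A s : clean_run A s -> all (fun x : X => x.1 \notin x.2) s.
Proof.
elim: s A => //= x s IH A /and3P [_ /eqP lost0 /IH ->]; rewrite andbT.
apply/negP => xL; have : x.1 \in (x.1 |: A) :&: x.2 by rewrite !inE eqxx xL.
by rewrite lost0 inE.
Qed.

Fixpoint clean_prob (a m : nat) : R :=
  if m is m'.+1 then (n - a)%:R / n%:R * q ^+ a.+1 * clean_prob a.+1 m' else 1.

Lemma Eseq_clean_run m A : Eseq rw m (fun s => (clean_run A s)%:R) = clean_prob #|A| m.
Proof.
elim: m A => [|m IH] A //=.
rewrite (eq_bigr (fun x : X => rw x *
   (((x.1 \notin A) && ((x.1 |: A) :&: x.2 == set0))%:R * clean_prob #|A|.+1 m))).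
  rewrite (sum_round_weight p (fun J L =>
     ((J \notin A) && ((J |: A) :&: L == set0))%:R * clean_prob #|A|.+1 m)).
  rewrite (eq_bigr (fun J => (J \notin A)%:R * (q ^+ #|A|.+1 * clean_prob #|A|.+1 m))).
    by rewrite sum_notin; ring.
  move=> J _; have [JA|_] /= := boolP (J \notin A); last first.
    by rewrite big1 => [|L _]; rewrite ?mul0r ?mulr0.
  have cardA : #|J |: A| = #|A|.+1 by rewrite cardsU1 JA.
  rewrite -cardA mul1r -sum_loss_disjoint mulr_suml.
  by apply: eq_bigr => L _; rewrite mulrA.
move=> x _; congr (_ * _).
have [/andP [xA lost0]|fail] /= := boolP ((x.1 \notin A) && ((x.1 |: A) :&: x.2 == set0)).
  have cardA : #|x.1 |: A| = #|A|.+1 by rewrite cardsU1 xA.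
  by rewrite mul1r -cardA -IH; apply: eq_Eseq => s _ /=; rewrite xA lost0.
rewrite mul0r -(Eseq_cst rw_sum1 m 0).
by apply: eq_Eseq => s _ /=; move: fail; case: (x.1 \notin A); case: (_ == set0).
Qed.

Lemma clean_probE a m : clean_prob a m =
  (\prod_(i < m) (n - a - i)%:R) / n%:R ^+ m * q ^+ (m * a + 'C(m.+1, 2)).
Proof.
elim: m a => [|m IH] a /=.
  by rewrite big_ord0 expr0 mul0n bin_small // invr1 !mulr1.
rewrite IH big_ord_recl subn0.
rewrite [in RHS](eq_bigr (fun i : 'I_m => (n - a.+1 - i)%:R)) => [|i _]; last first.
  by rewrite lift0; congr (_%:R); lia.
have -> : (m.+1 * a + 'C(m.+2, 2) = a.+1 + (m * a.+1 + 'C(m.+1, 2)))%N.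
  by rewrite binS bin1; lia.
rewrite !exprD [n%:R ^+ m.+1]exprS.
by field; rewrite n_neq0 // andbT expf_neq0 // n_neq0.
Qed.

Fixpoint fill_rate (m : nat) : R :=
  if m is m'.+1 then fill_rate m' * (m%:R / n%:R * q ^+ m) else 1.

Lemma fill_rateE m : fill_rate m = m`!%:R / n%:R ^+ m * q ^+ 'C(m.+1, 2).
Proof.
elim: m => [|m IH] /=; first by rewrite expr0 bin_small // invr1 !mulr1.
have -> : 'C(m.+2, 2) = ('C(m.+1, 2) + m.+1)%N by rewrite binS bin1.
rewrite IH factS natrM !exprD [n%:R ^+ m.+1]exprS.
by field; rewrite n_neq0 // andbT expf_neq0 // n_neq0.
Qed.

Lemma clean_prob_fill : clean_prob 0 n = fill_rate n.
Proof.
rewrite clean_probE fill_rateE muln0 add0n -natr_prod -ffactnn ffact_prod.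
by congr (_%:R / _ * _); apply: eq_bigr => i _; rewrite subn0.
Qed.

Lemma fill_rate_gt0 m : 0 < fill_rate m.
Proof.
elim: m => [|m IH] /=; first exact: ltr01.
by rewrite !mulr_gt0 ?invr_gt0 ?ltr0n ?exprn_gt0 ?q_gt0.
Qed.

Lemma fill_rate_le_inv m : (0 < m <= n)%N -> fill_rate m <= n%:R^-1.
Proof.
elim: m => [//|[_ _|m IH /andP [_ mn]]] /=.
  by rewrite mul1r expr1 mul1r ler_piMr ?invr_ge0 ?q_le1.
have factor_le1 : m.+2%:R / n%:R * q ^+ m.+2 <= 1.
  rewrite -[leRHS]mulr1; apply: ler_pM; rewrite ?divr_ge0 ?exprn_ge0 ?q_ge0 //.
    by rewrite ler_pdivrMr ?ltr0n // mul1r ler_nat.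
  by rewrite exprn_ile1 ?q_ge0 ?q_le1.
have IHm : fill_rate m.+1 <= n%:R^-1 by apply: IH; rewrite (ltnW mn).
rewrite -[leRHS]mulr1; apply: ler_pM (ltW (fill_rate_gt0 _)) _ IHm factor_le1.
by rewrite mulr_ge0 ?divr_ge0 ?exprn_ge0 ?q_ge0.
Qed.

Lemma expR_center_fill_rate : expR (ccc_center n p) * fill_rate n = 1.
Proof.
rewrite /ccc_center expRD expRM_natl fill_rateE.
rewrite lnK ?posrE ?invr_gt0 ?q_gt0 // lnK; last first.
  by rewrite posrE divr_gt0 // ltr0n ?expn_gt0 ?hn ?fact_gt0.
have -> : ((n * n.+1)./2 = 'C(n.+1, 2))%N by rewrite bin2 mulnC.
rewrite natrX exprVn.
have fact_neq0 : (n`!%:R : R) != 0 by rewrite pnatr_eq0 -lt0n fact_gt0.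
by field; rewrite fact_neq0 !expf_neq0 ?n_neq0 // gt_eqF ?q_gt0.
Qed.

(* The correction factor is [prod_(1 <= i <= m) expR (q ^+ i / p)]; each factor
   is at least [1 / (1 - q ^+ i)], which is what the induction on the number of
   rounds in [Eseq_subset_state_le] needs. *)
Definition subset_bound (m : nat) : R :=
  fill_rate m * expR (q * (1 - q ^+ m) / p ^+ 2).

Lemma subset_bound_ge0 m : 0 <= subset_bound m.
Proof. by rewrite mulr_ge0 ?expR_ge0 ?ltW ?fill_rate_gt0. Qed.

Lemma subset_bound0 : subset_bound 0 = 1.
Proof. by rewrite /subset_bound /= expr0 subrr mulr0 mul0r expR0 mulr1. Qed.

Lemma subset_bound_le m : subset_bound m <= fill_rate m * expR (q / p ^+ 2).
Proof.
rewrite ler_pM2l ?fill_rate_gt0 // ler_expR ler_pM2r ?invr_gt0 ?exprn_gt0 //.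
by rewrite ler_piMr ?q_ge0 // lerBlDr lerDl exprn_ge0 ?q_ge0.
Qed.

Lemma one_le_mul_expR (y : R) : 0 <= y <= q -> 1 <= (1 - y) * expR (y / p).
Proof.
case/andP => y0 yq; have pn0 : p != 0 by rewrite gt_eqF.
apply: le_trans (ler_wpM2l _ (expR_ge1Dx _)); last by rewrite subr_ge0 (le_trans yq) ?q_le1.
rewrite -subr_ge0 (_ : _ - 1 = y / p * (q - y)); last by field.
by rewrite mulr_ge0 ?divr_ge0 ?subr_ge0 // ltW.
Qed.

Lemma subset_bound_rec m :
  q ^+ m.+1 * (subset_bound m.+1 + m.+1%:R / n%:R * subset_bound m) <= subset_bound m.+1.
Proof.
set y := q ^+ m.+1; set c := m.+1%:R / n%:R.
set E := expR (q * (1 - q ^+ m) / p ^+ 2); set Z := expR (y / p).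
have y0 : 0 <= y by rewrite exprn_ge0 ?q_ge0.
have yq : y <= q by rewrite /y exprS ler_piMr ?q_ge0 ?exprn_ile1 ?q_ge0 ?q_le1.
have EZ : expR (q * (1 - q ^+ m.+1) / p ^+ 2) = E * Z.
  rewrite -expRD; congr expR; rewrite /y exprS.
  by field; rewrite gt_eqF.
rewrite /subset_bound /= EZ -/y -/c -/E -subr_ge0.
rewrite (_ : _ - _ = fill_rate m * c * y * E * ((1 - y) * Z - 1)); last by ring.
have c0 : 0 <= c by rewrite divr_ge0.
rewrite !mulr_ge0 ?subr_ge0 ?expR_ge0 ?(ltW (fill_rate_gt0 _)) //.
by apply: one_le_mul_expR; rewrite y0 yq.
Qed.

Lemma cover_indicator_le (A S : {set 'I_n}) (J : 'I_n) :
  ((A \subset J |: S)%:R : R) <=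
  (A \subset S)%:R + \sum_(i in A) ((J == i) && (A :\ i \subset S))%:R.
Proof.
have sum0 : 0 <= \sum_(i in A) (((J == i) && (A :\ i \subset S))%:R : R).
  by apply: sumr_ge0 => i _; apply: ler0n.
have [AS|nAS] := boolP (A \subset S).
  by rewrite -[X in X <= _]addr0 lerD // ler_nat leq_b1.
have [AJS|] := boolP (A \subset J |: S); last by rewrite add0r.
have JA : J \in A.
  apply: contraNT nAS => JA; apply/fintype.subsetP => i iA.
  move: (fintype.subsetP AJS i iA); rewrite !inE => /orP [/eqP iJ|//].
  by move: JA; rewrite -iJ iA.
have AJS' : A :\ J \subset S.
  apply/fintype.subsetP => i; rewrite !inE => /andP [iJ iA].
  by move: (fintype.subsetP AJS i iA); rewrite !inE (negbTE iJ).
rewrite add0r (bigD1 J) //= eqxx AJS' /= lerDl.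
by apply: sumr_ge0 => i _; apply: ler0n.
Qed.

Lemma Eseq_step_subset_le (A S : {set 'I_n}) :
  \sum_x rw x * (A \subset step S x)%:R <=
  q ^+ #|A| * ((A \subset S)%:R + n%:R^-1 * \sum_(i in A) (A :\ i \subset S)%:R).
Proof.
have stepE (x : X) : ((A \subset step S x)%:R : R) =
    (A :&: x.2 == set0)%:R * (A \subset x.1 |: S)%:R.
  rewrite /ccc_step subsetD setI_eq0.
  by case: (A \subset x.1 |: S); case: [disjoint A & x.2]; rewrite ?mulr1 ?mulr0.
under eq_bigr do rewrite stepE.
rewrite (sum_round_weight p (fun J L => (A :&: L == set0)%:R * (A \subset J |: S)%:R)).
rewrite (eq_bigr (fun J => q ^+ #|A| * (A \subset J |: S)%:R)); last first.
  by move=> J _; rewrite -sum_loss_disjoint mulr_suml; apply: eq_bigr => L _; rewrite mulrA.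
rewrite -mulr_sumr mulrCA ler_wpM2l ?exprn_ge0 ?q_ge0 //.
apply: le_trans (ler_wpM2l _ (ler_sum _ (fun J _ => cover_indicator_le A S J))) _.
  by rewrite invr_ge0.
rewrite big_split /= sumr_const card_ord exchange_big /= mulrDr.
rewrite -[(_ \subset S)%:R *+ n]mulr_natl mulrA mulVf ?n_neq0 // mul1r lerD //.
rewrite ler_wpM2l ?invr_ge0 // ler_sum // => i _.
by rewrite (bigD1 i) //= eqxx /= big1 ?addr0 // => J /negbTE ->.
Qed.

Lemma Eseq_subset_state_le k (A : {set 'I_n}) :
  Eseq rw k (fun s => (A \subset foldl step set0 s)%:R) <= subset_bound #|A|.
Proof.
elim: k A => [|k IH] A.
  rewrite /= finset.subset0; have [->|_] := eqVneq A set0.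
    by rewrite cards0 subset_bound0.
  exact: subset_bound_ge0.
rewrite Eseq_rcons; apply: le_trans (ler_Eseq rw_ge0 _) _.
  move=> s _; under eq_bigr do rewrite foldl_rcons.
  exact: Eseq_step_subset_le.
rewrite EseqZl EseqD EseqZl (Eseq_sum rw (fun i => i \in A)).
have [A0|] := eqVneq A set0.
  rewrite big_pred0 => [|i]; last by rewrite A0 inE.
  rewrite mulr0 addr0 A0 cards0 expr0 mul1r.
  by have := IH set0; rewrite cards0.
rewrite -cards_eq0 -lt0n => /prednK cardA.
rewrite -cardA; apply: le_trans (subset_bound_rec _); rewrite cardA.
rewrite ler_wpM2l ?exprn_ge0 ?q_ge0 // lerD // [_ / _]mulrC -mulrA.
rewrite ler_wpM2l ?invr_ge0 // mulr_natl -sumr_const ler_sum // => i iA.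
by rewrite (cardsD1 i A) iA; apply: IH.
Qed.

Lemma Eseq_full_le b k : (k <= b)%N ->
  Eseq rw b (fun s => (foldl step set0 (take k s) == [set: 'I_n])%:R)
  <= fill_rate n * expR (q / p ^+ 2).
Proof.
move=> kb; rewrite -(subnKC kb).
rewrite (Eseq_take rw_sum1 k (b - k)
   (fun t => (foldl step set0 t == [set: 'I_n])%:R)).
apply: le_trans (subset_bound_le n).
rewrite -[in leRHS](card_ord n) -cardsT.
apply: le_trans (Eseq_subset_state_le k _).
apply: (ler_Eseq rw_ge0) => s _.
by case: eqP => [->|_]; rewrite ?finset.subsetT ?ler0n.
Qed.

End CleanRuns.

Lemma expr1B_mul1D_le1 (R : realFieldType) (x : R) K :
  0 <= x <= 1 -> (1 - x) ^+ K * (1 + K%:R * x) <= 1.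
Proof.
case/andP => x0 x1; elim: K => [|K IH]; first by rewrite expr0 mul0r addr0 mulr1.
have P0 : 0 <= (1 - x) ^+ K by rewrite exprn_ge0 ?subr_ge0.
set P := (1 - x) ^+ K in IH P0 *.
rewrite exprS -/P -natr1.
have -> : (1 - x) * P * (1 + (K%:R + 1) * x) =
  P * (1 + K%:R * x) - P * (K%:R + 1) * x * x by ring.
have : 0 <= P * (K%:R + 1) * x * x by rewrite !mulr_ge0 ?addr_ge0.
lra.
Qed.

Section Windows.
Variables (R : realType) (p : R) (n : nat).
Hypothesis hp0 : 0 < p.
Hypothesis hp1 : p < 1.
Hypothesis hn : (0 < n)%N.

Local Notation q := (1 - p).
Local Notation rw := (@ccc_round_weight R n p).
Local Notation X := (ccc_round n).
Local Notation step := (@ccc_step n).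
Local Notation rw_ge0 := (round_weight_ge0 hp0 hp1).
Local Notation rw_sum1 := (sum_round_weight1 p hn).

Definition window_hit (s : seq X) : bool :=
  [exists j : 'I_n, clean_run set0 (take n (drop j s))].

Definition lost_then_clean (s : seq X) : bool :=
  if s is x :: r then (x.1 \in x.2) && clean_run set0 (take n r) else false.

(* A round losing its own drawn coupon cannot occur inside a clean window, so
   the events [window_at j s], [j < n], are pairwise disjoint. *)
Definition window_at (j : nat) (s : seq X) : bool :=
  if j is k.+1 then lost_then_clean (drop k s) else clean_run set0 (take n s).

Lemma window_at_clean j s : window_at j s -> clean_run set0 (take n (drop j s)).
Proof.
case: j => [|k] /=; first by rewrite drop0.
rewrite /lost_then_clean -add1n -drop_drop.
by case: (drop k s) => [//|x r] /andP [_]; rewrite /= drop0.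
Qed.

Lemma window_at_hit j s : (j < n)%N -> window_at j s -> window_hit s.
Proof. by move=> jn /window_at_clean run; apply/existsP; exists (Ordinal jn). Qed.

Lemma window_at_disjoint i j s :
  (i < j)%N -> (j < n)%N -> window_at j s -> window_at i s -> False.
Proof.
case: j => [//|k] ik kn /=.
rewrite /lost_then_clean; case sk: (drop k s) => [//|x r] /andP [xL _] /window_at_clean run.
suff xin : x \in take n (drop i s).
  by move/allP: (clean_run_keeps_drawn run) => /(_ x xin); rewrite xL.
have dk : drop k s = drop (k - i) (drop i s) by rewrite drop_drop subnK // -ltnS.
have -> : take n (drop i s) = take ((k - i) + (n - (k - i))) (drop i s).
  by rewrite subnKC //; lia.
rewrite takeD mem_cat -dk sk; apply/orP; right.
have -> : (n - (k - i) = (n - (k - i)).-1.+1)%N by rewrite prednK //; lia.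
exact: mem_head.
Qed.

Lemma sum_window_at_le s : \sum_(j < n) ((window_at j s)%:R : R) <= (window_hit s)%:R.
Proof.
have [/existsP [j0 w0] | /existsPn none] := boolP [exists j : 'I_n, window_at j s].
  rewrite (window_at_hit (ltn_ord j0) w0) (bigD1 j0) //= w0 big1 ?addr0 // => j jj0.
  case wj: (window_at j s) => //; exfalso.
  case: (ltngtP j j0) => [lt|gt|/val_inj eq].
  - exact: (window_at_disjoint lt (ltn_ord j0) w0 wj).
  - exact: (window_at_disjoint gt (ltn_ord j) wj w0).
  - by move: jj0; rewrite eq eqxx.
by rewrite big1 ?ler0n // => j _; rewrite (negbTE (none j)).
Qed.

Lemma Eseq_clean_window c : (n <= c)%N ->
  Eseq rw c (fun s => (clean_run set0 (take n s))%:R) = fill_rate p n n.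
Proof.
move=> nc; rewrite -(subnKC nc).
rewrite (Eseq_take rw_sum1 n (c - n) (fun t => (clean_run set0 t)%:R)).
by rewrite Eseq_clean_run // cards0 clean_prob_fill.
Qed.

Lemma Eseq_window_at_ge j : (j < n)%N ->
  p * fill_rate p n n <= Eseq rw (n + n) (fun s => (window_at j s)%:R).
Proof.
case: j => [|k] kn.
  by rewrite Eseq_clean_window ?leq_addr // ler_piMl ?ltW ?fill_rate_gt0.
have -> : (n + n = k + (n + n - k.+1).+1)%N by lia.
rewrite (Eseq_drop rw_sum1 k _ (fun t => (lost_then_clean t)%:R)) /=.
rewrite (eq_bigr (fun x : X => rw x * (x.1 \in x.2)%:R * fill_rate p n n)).
  by rewrite -mulr_suml prob_drawn_lost.
move=> x _; rewrite -mulrA; congr (_ * _); case: (x.1 \in x.2) => /=.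
  by rewrite mul1r Eseq_clean_window //; lia.
by rewrite mul0r (Eseq_cst rw_sum1).
Qed.

Definition hit_prob : R := Eseq rw (n + n) (fun s => (window_hit s)%:R).

Lemma hit_prob_ge : n%:R * p * fill_rate p n n <= hit_prob.
Proof.
apply: le_trans (ler_Eseq rw_ge0 (fun s _ => sum_window_at_le s)).
rewrite (Eseq_sum rw xpredT) /= -mulrA mulr_natl -[n in _ *+ n]card_ord -sumr_const.
by apply: ler_sum => j _; apply: Eseq_window_at_ge.
Qed.

Lemma one_sub_hit_prob : 1 - hit_prob = Eseq rw (n + n) (fun s => (~~ window_hit s)%:R).
Proof.
rewrite -[X in X - _](Eseq_cst rw_sum1 (n + n) 1) -EseqB.
by apply: eq_Eseq => s _; case: (window_hit s); rewrite ?subrr ?subr0.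
Qed.

Lemma hit_prob_ge0 : 0 <= hit_prob.
Proof. by apply: (Eseq_ge0 rw_ge0 rw_sum1) => s _; apply: ler0n. Qed.

Lemma hit_prob_le1 : hit_prob <= 1.
Proof.
rewrite -subr_ge0 one_sub_hit_prob.
by apply: (Eseq_ge0 rw_ge0 rw_sum1) => s _; apply: ler0n.
Qed.

Fixpoint no_hit (K : nat) (s : seq X) : bool :=
  if K is K'.+1 then ~~ window_hit (take (n + n) s) && no_hit K' (drop (n + n) s)
  else true.

Lemma Eseq_no_hit K r :
  Eseq rw ((n + n) * K + r) (fun s => (no_hit K s)%:R) = (1 - hit_prob) ^+ K.
Proof.
elim: K => [|K IH]; first by rewrite muln0 add0n expr0 (Eseq_cst rw_sum1).
rewrite mulnS -addnA exprS -IH one_sub_hit_prob -Eseq_cat.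
apply: eq_Eseq => s _ /=.
by case: (window_hit _); case: (no_hit _ _); rewrite /= ?mulr1 ?mulr0 ?mul0r.
Qed.

Lemma no_hit_full K s (S : {set 'I_n}) : ((n + n) * K <= size s)%N -> ~~ no_hit K s ->
  exists2 k, (k <= (n + n) * K)%N & foldl step S (take k s) = [set: 'I_n].
Proof.
elim: K s S => [|K IH] s S //=; rewrite mulnS => sz.
rewrite negb_and negbK => /orP [/existsP [j run]|nohit].
  have jn := ltn_ord j.
  have windowE : take n (drop j (take (n + n) s)) = take n (drop j s).
    have -> : (n + n = (n + n - j) + j)%N by rewrite subnK //; lia.
    by rewrite -take_drop take_takel //; lia.
  rewrite windowE in run; exists (j + n)%N; first by lia.
  rewrite takeD foldl_cat; apply: clean_run_full run _.
  by rewrite size_takel // size_drop; lia.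
have [|k kK kfull] := IH (drop (n + n) s) (foldl step S (take (n + n) s)) _ nohit.
  by rewrite size_drop; lia.
by exists (n + n + k)%N; [lia|rewrite takeD foldl_cat].
Qed.

Definition full_by (b : nat) (s : seq X) : bool :=
  [exists k : 'I_b.+1, foldl step set0 (take k s) == [set: 'I_n]].

Lemma Eseq_not_full_le b :
  Eseq rw b (fun s => (~~ full_by b s)%:R) <= (1 - hit_prob) ^+ (b %/ (n + n)).
Proof.
set K := (b %/ (n + n))%N.
have bE : b = ((n + n) * K + b %% (n + n))%N by rewrite mulnC -divn_eq.
rewrite -(Eseq_no_hit K (b %% (n + n))) -bE.
apply: (ler_Eseq rw_ge0) => s sb.
case nohit: (no_hit K s); first by rewrite ler_nat leq_b1.
have [|k kK kfull] := no_hit_full set0 _ (negbT nohit).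
  by rewrite sb [X in (_ <= X)%N]bE leq_addr.
have kb : (k < b.+1)%N by rewrite ltnS (leq_trans kK) // [X in (_ <= X)%N]bE leq_addr.
suff -> : full_by b s by [].
by apply/existsP; exists (Ordinal kb); rewrite kfull.
Qed.

Lemma upper_tail b :
  p / 2 * (b.+1%:R * fill_rate p n n - 2) * Eseq rw b (fun s => (~~ full_by b s)%:R) <= 1.
Proof.
set P := Eseq rw b _; set K := (b %/ (n + n))%N; set rho := fill_rate p n n.
have P0 : 0 <= P by apply: (Eseq_ge0 rw_ge0 rw_sum1) => s _; apply: ler0n.
have PK : P * (1 + K%:R * hit_prob) <= 1.
  have h01 : 0 <= hit_prob <= 1 by rewrite hit_prob_ge0 hit_prob_le1.
  apply: le_trans (expr1B_mul1D_le1 K h01).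
  by rewrite ler_wpM2r ?Eseq_not_full_le // addr_ge0 ?mulr_ge0 ?hit_prob_ge0.
have nrho : n%:R * rho <= 1.
  rewrite -[leRHS](mulfV (n_neq0 R hn)); apply: ler_wpM2l; first exact: ler0n.
  by apply: (fill_rate_le_inv hp0 hp1 hn); rewrite hn leqnn.
have b1K : (b.+1%:R : R) <= (K.+1 * (n + n))%:R.
  by rewrite ler_nat ltn_ceil // addn_gt0 hn.
have Kh : p / 2 * (b.+1%:R * rho - 2) <= K%:R * hit_prob.
  apply: le_trans (ler_wpM2l (ler0n _ K) hit_prob_ge); rewrite -/rho.
  have := ler_wpM2r (ltW (fill_rate_gt0 hp1 hn n)) b1K.
  rewrite -/rho natrM !natrD -natr1 => b1rho.
  have p2_ge0 : 0 <= p / 2 by rewrite divr_ge0 ?ltW.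
  have := ler_wpM2l p2_ge0 b1rho; have := ler_wpM2l (ltW hp0) nrho; lra.
have : p / 2 * (b.+1%:R * rho - 2) * P <= K%:R * hit_prob * P.
  by rewrite ler_wpM2r.
nra.
Qed.

End Windows.

Lemma sum_indicator_pos_lt_le (R : realDomainType) (Y : R) N : 0 <= Y ->
  \sum_(k < N) (((0 < k)%N && (k%:R < Y))%:R : R) <= Y.
Proof.
set S := fun N => \sum_(k < N) (((0 < k)%N && (k%:R < Y))%:R : R).
move=> Y0; suff : S N <= Y /\ S N <= N.-1%:R by case.
elim: N => [|N [IHY IHN]]; first by rewrite /S big_ord0.
rewrite /S big_ord_recr -/(S N) /=.
have [/andP [N0 NY]|_] /= := boolP ((0 < N)%N && (N%:R < Y)).
  have SN1 : S N + 1 <= N%:R by rewrite -[in leRHS](prednK N0) -natr1 lerD2r.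
  by split; rewrite (le_trans SN1) // ltW.
by rewrite addr0; split => //; rewrite (le_trans IHN) // ler_nat leq_pred.
Qed.

Lemma lt_expR_of_ln_far (R : realType) (c M t : R) : 0 < t ->
  t <= expR (c + M) -> ~~ (`|ln t - c| <= M) -> t < expR (c - M).
Proof.
move=> t0 tle; have lnt : ln t <= c + M by rewrite -[leRHS]expRK ler_ln ?posrE ?expR_gt0.
rewrite -ltNge ltr_normr => /orP [|far]; first by lra.
by rewrite -(lnK (x := t)) ?posrE // ltr_expR; lra.
Qed.

Section CompletionTime.
Variables (R : realType) (p : R) (n : nat).
Hypothesis hp0 : 0 < p.
Hypothesis hp1 : p < 1.
Hypothesis hn : (0 < n)%N.

Local Notation q := (1 - p).
Local Notation rw := (@ccc_round_weight R n p).
Local Notation X := (ccc_round n).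
Local Notation step := (@ccc_step n).
Local Notation rw_ge0 := (round_weight_ge0 hp0 hp1).
Local Notation rw_sum1 := (sum_round_weight1 p hn).
Local Notation full_at k s := (foldl step set0 (take k s) == [set: 'I_n]).

Definition first_full (b : nat) (s : seq X) (t : nat) : bool :=
  full_at t s && [forall k : 'I_b.+1, (k < t)%N ==> ~~ full_at k s].

Lemma ccc_prob_T_Eseq b A : ccc_prob_T n p b A =
  Eseq rw b (fun s => [exists t : 'I_b.+1, first_full b s t && A t]%:R).
Proof.
rewrite /ccc_prob_T -sum_ffun_Eseq; apply: eq_bigr => w _.
by rewrite /ccc_weight /ccc_T_is /ccc_state codomE.
Qed.

Lemma first_full_indicator_ge b (A : pred nat) (Y : R) s :
  (forall t, (0 < t <= b)%N -> ~~ A t -> t%:R < Y) ->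
  1 - (~~ full_by b s)%:R
    - \sum_(k < b.+1) (((0 < k)%N && (k%:R < Y))%:R * (full_at k s)%:R : R)
  <= [exists t : 'I_b.+1, first_full b s t && A t]%:R.
Proof.
move=> far.
have early0 (P : pred 'I_b.+1) :
    0 <= \sum_(k < b.+1 | P k) (((0 < k)%N && (k%:R < Y))%:R * (full_at k s)%:R : R).
  by rewrite sumr_ge0 // => k _; rewrite mulr_ge0 ?ler0n.
have [_|noA] := boolP [exists t : 'I_b.+1, first_full b s t && A t].
  by have := early0 xpredT; have := ler0n R (~~ full_by b s); rewrite /=; lra.
have [/existsP [k0 k0full]|] := boolP (full_by b s); last first.
  by have := early0 xpredT; rewrite /=; lra.
have [t /andP [tb tfull] tmin] := ex_minnP (ex_intro (fun k => (k <= b)%N && full_at k s)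
  k0 (introT andP (conj (ltn_ord k0) k0full))).
have t0 : (0 < t)%N.
  case: t tfull {tb tmin} => // /eqP; rewrite take0 /= => /setP /(_ (Ordinal hn)).
  by rewrite !inE.
have tA : ~~ A t.
  apply: contra noA => At; apply/existsP; exists (Ordinal (tb : t < b.+1)%N).
  rewrite At andbT /first_full tfull; apply/forallP => k; apply/implyP => kt.
  by apply: contraTN kt => kfull; rewrite -leqNgt tmin // kfull -ltnS ltn_ord.
rewrite (bigD1 (Ordinal (tb : t < b.+1)%N)) //= t0 (far t) ?t0 // tfull /= mulr1.
by have := early0 (predC1 (Ordinal (tb : t < b.+1)%N)); rewrite /=; lra.
Qed.

Lemma ccc_prob_T_ge b (A : pred nat) (Y : R) :
  (forall t, (0 < t <= b)%N -> ~~ A t -> t%:R < Y) ->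
  1 - Eseq rw b (fun s => (~~ full_by b s)%:R)
    - \sum_(k < b.+1) ((0 < k)%N && (k%:R < Y))%:R * Eseq rw b (fun s => (full_at k s)%:R)
  <= ccc_prob_T n p b A.
Proof.
move=> far; rewrite ccc_prob_T_Eseq.
apply: le_trans (ler_Eseq rw_ge0 (fun s _ => first_full_indicator_ge s far)).
rewrite !EseqB (Eseq_cst rw_sum1) (Eseq_sum _ xpredT).
by under [in leRHS]eq_bigr do rewrite EseqZl.
Qed.

Lemma early_full_le b (Y : R) : 0 <= Y ->
  \sum_(k < b.+1) ((0 < k)%N && (k%:R < Y))%:R * Eseq rw b (fun s => (full_at k s)%:R)
  <= Y * (fill_rate p n n * expR (q / p ^+ 2)).
Proof.
move=> Y0; apply: le_trans (ler_wpM2r _ (sum_indicator_pos_lt_le b.+1 Y0)).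
  rewrite mulr_suml; apply: ler_sum => k _; apply: ler_wpM2l; first exact: ler0n.
  by apply: (Eseq_full_le hp0 hp1 hn); rewrite -ltnS ltn_ord.
by rewrite mulr_ge0 ?expR_ge0 ?ltW ?fill_rate_gt0.
Qed.

Lemma ccc_prob_T_center_ge (Z : R) : 2 < Z ->
  1 - 2 / (p * (Z - 2)) - expR (q / p ^+ 2) / Z <=
  ccc_prob_T n p (Num.truncn (expR (ccc_center n p + ln Z)))
    (fun t : nat => `|ln (t%:R : R) - ccc_center n p| <= ln Z).
Proof.
move=> Z2; have Z0 : 0 < Z by apply: lt_trans Z2.
set c := ccc_center n p; set b := Num.truncn _; set rho := fill_rate p n n.
have crho : expR c * rho = 1 := expR_center_fill_rate hp1 hn.
have Zrho : Z < b.+1%:R * rho.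
  have := truncnS_gt (expR (c + ln Z)); rewrite -/b expRD lnK ?posrE // => ecZ.
  by rewrite -(ltr_pM2l (expR_gt0 c)) mulrCA crho mulr1.
have Yrho : expR (c - ln Z) * rho = Z^-1.
  by rewrite expRD expRN lnK ?posrE // mulrAC crho mul1r.
apply: le_trans (ccc_prob_T_ge (Y := expR (c - ln Z)) _); last first.
  move=> t /andP [t0 tb]; apply: lt_expR_of_ln_far; first by rewrite ltr0n.
  by rewrite -truncn_ge_nat // expR_ge0.
have := early_full_le b (expR_ge0 (c - ln Z)); rewrite mulrA Yrho mulrC => early.
have late : Eseq rw b (fun s => (~~ full_by b s)%:R) <= 2 / (p * (Z - 2)).
  have P0 := Eseq_ge0 rw_ge0 rw_sum1 (fun s _ => ler0n R (~~ full_by b s)).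
  have := upper_tail hp0 hp1 hn b; rewrite -/rho => tail.
  have : p * (Z - 2) * Eseq rw b (fun s => (~~ full_by b s)%:R)
      <= p * (b.+1%:R * rho - 2) * Eseq rw b (fun s => (~~ full_by b s)%:R).
    by rewrite ler_wpM2r // ler_wpM2l ?(ltW hp0) // lerD2r ltW.
  rewrite ler_pdivlMr ?mulr_gt0 ?subr_gt0 //; lra.
lra.
Qed.

End CompletionTime.

Theorem mainTheorem19 (R : realType) (p : R) (hp0 : 0 < p) (hp1 : p < 1) :
  forall eps : R, 0 < eps ->
  exists M : R, forall n : nat, (1 <= n)%N ->
    1 - eps <=
    ccc_prob_T n p (Num.truncn (expR (ccc_center n p + M)))
      (fun t : nat => `|ln (t%:R : R) - ccc_center n p| <= M).
Proof.
move=> eps eps0; set C := expR ((1 - p) / p ^+ 2).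
have pC0 : 0 <= p * C by rewrite mulr_ge0 ?expR_ge0 ?ltW.
have p2 : 0 < 2 / p by rewrite divr_gt0.
set Z := 2 + 4 / (p * eps) + 2 * C / eps.
have Z2 : 2 < Z by rewrite /Z -addrA ltrDl addr_gt0 ?divr_gt0 ?mulr_gt0 ?expR_gt0.
exists (ln Z) => n n1; apply: le_trans (ccc_prob_T_center_ge hp0 hp1 n1 Z2).
have late : 2 / (p * (Z - 2)) <= eps / 2.
  rewrite ler_pdivrMr ?mulr_gt0 ?subr_gt0 //.
  have -> : eps / 2 * (p * (Z - 2)) = 2 + p * C by rewrite /Z; field; rewrite !gt_eqF.
  by rewrite lerDl.
have early : C / Z <= eps / 2.
  rewrite ler_pdivrMr ?(lt_trans _ Z2) //.
  have -> : eps / 2 * Z = eps + 2 / p + C by rewrite /Z; field; rewrite !gt_eqF.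
  by rewrite lerDr addr_ge0 ?ltW.
by rewrite -/C; lra.
Qed.
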